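(* Let $g\in\mathbb{C}[\alpha,x^{\pm}]^s$ and assume $\mathcal{A}$ and $\mathcal{X}$ satisfy one of: (i) $\mathcal{A}\subseteq\mathbb{R}^\ell$ and $\mathcal{X}\subseteq(\mathbb{R}^* )^n$ are both semialgebraic; (ii) $\mathcal{A}\subseteq\mathbb{C}^\ell$ and $\mathcal{X}\subseteq(\mathbb{C}^* )^n$ are both constructible; (iii) $\mathcal{A}\subseteq\mathbb{R}^\ell$ is semialgebraic and $\mathcal{X}\subseteq(\mathbb{C}^* )^n$ is constructible. Assume additionally that $\mathcal{A}$ is locally Zariski dense in $\mathbb{C}^\ell$. Then $\mathcal{D}_{g,\mathcal{A}}(\mathcal{X})$ is Zariski dense in $\mathbb{C}^\ell$ if and only if it has nonempty Euclidean interior in $\mathcal{A}$.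
   Context: Let $g\in\mathbb{C}[\alpha_1,\dots,\alpha_\ell,x_1^{\pm1},\dots,x_n^{\pm1}]^s$, $g_\alpha=g(\alpha,\cdot)$, $\mathbb{V}_{\mathbb{C}^*}(g_\alpha)=\{x\in(\mathbb{C}^* )^n: g_\alpha(x)=0\}$. For $\mathcal{A}\subseteq\mathbb{C}^\ell$, $\mathcal{X}\subseteq(\mathbb{C}^* )^n$, $\mathcal{D}_{g,\mathcal{A}}(\mathcal{X})=\{\alpha\in\mathcal{A}:\mathbb{V}_{\mathbb{C}^*}(g_\alpha)\cap\mathcal{X}\neq\emptyset\}$. A set $X\subseteq\mathbb{C}^m$ is locally Zariski dense if for every Euclidean open $U\subseteq\mathbb{C}^m$ with $U\cap X\neq\emptyset$, the Zariski closure of $U\cap X$ is $\mathbb{C}^m$. A subset $S$ has nonempty Euclidean interior in $\mathcal{A}$ if there is an open Euclidean ball $B$ with $\emptyset\ne B\cap\mathcal{A}\subseteq S$. *)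

From HB Require Import structures.
From mathcomp Require Import all_boot all_algebra.
From mathcomp Require Import mpoly.
From mathcomp Require Import reals.
From mathcomp Require Import complex.

Set Implicit Arguments.
Unset Strict Implicit.
Unset Printing Implicit Defensive.

Import GRing.Theory Num.Theory.
Local Open Scope ring_scope.

Section Defs.
Variable R : realType.

Local Notation C := (R[i]).

Definition realpt (m : nat) (y : 'I_m -> R) : 'I_m -> C :=
  fun i => ((y i)%:C)%C.

Definition in_torus (m : nat) (x : 'I_m -> C) : Prop := forall i, x i != 0.

(* Semialgebraic subsets of R^m: boolean combinations of sets {p > 0},
   p a real polynomial (the set {p = 0} is the complement of
   {p > 0} U {-p > 0}). *)
Inductive semialgebraic (m : nat) : (('I_m -> R) -> Prop) -> Prop :=
| sa_pos (p : {mpoly R[m]}) : semialgebraic (fun y => 0 < p.@[y])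
| sa_union S T : semialgebraic S -> semialgebraic T ->
    semialgebraic (fun y => S y \/ T y)
| sa_compl S : semialgebraic S -> semialgebraic (fun y => ~ S y)
| sa_ext S T : (forall y, S y <-> T y) -> semialgebraic S -> semialgebraic T.

Inductive constructible (m : nat) : (('I_m -> C) -> Prop) -> Prop :=
| co_zero (p : {mpoly C[m]}) : constructible (fun x => p.@[x] = 0)
| co_union S T : constructible S -> constructible T ->
    constructible (fun x => S x \/ T x)
| co_compl S : constructible S -> constructible (fun x => ~ S x)
| co_ext S T : (forall x, S x <-> T x) -> constructible S -> constructible T.

Definition real_semialgebraic (m : nat) (A : ('I_m -> C) -> Prop) : Prop :=
  exists S : ('I_m -> R) -> Prop, semialgebraic S /\
    forall x, A x <-> exists y, S y /\ x = realpt y.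

Definition real_torus_semialgebraic (m : nat) (X : ('I_m -> C) -> Prop) :=
  real_semialgebraic X /\ forall x, X x -> in_torus x.

Definition torus_constructible (m : nat) (X : ('I_m -> C) -> Prop) :=
  constructible X /\ forall x, X x -> in_torus x.

(* Open Euclidean ball in C^m (radius r > 0 assumed where used). *)
Definition eball (m : nat) (c : 'I_m -> C) (r : R) : ('I_m -> C) -> Prop :=
  fun x => \sum_(i < m) `|x i - c i| ^+ 2 < ((r ^+ 2)%:C)%C.

Definition eopen (m : nat) (U : ('I_m -> C) -> Prop) : Prop :=
  forall x, U x -> exists r : R, 0 < r /\ forall y, eball x r y -> U y.

Definition zariski_closure (m : nat) (X : ('I_m -> C) -> Prop)
  : ('I_m -> C) -> Prop :=
  fun x => forall S : {mpoly C[m]} -> Prop,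
    (forall p, S p -> forall y, X y -> p.@[y] = 0) ->
    forall p, S p -> p.@[x] = 0.

Definition zariski_dense (m : nat) (X : ('I_m -> C) -> Prop) : Prop :=
  forall x, zariski_closure X x.

Definition locally_zariski_dense (m : nat) (X : ('I_m -> C) -> Prop) :=
  forall U : ('I_m -> C) -> Prop, eopen U -> (exists x, U x /\ X x) ->
    zariski_dense (fun x => U x /\ X x).

Definition nonempty_interior_in (m : nat) (A S : ('I_m -> C) -> Prop) :=
  exists (c : 'I_m -> C) (r : R), 0 < r /\
    (exists x, eball c r x /\ A x) /\
    (forall x, eball c r x -> A x -> S x).

(* Elements of C[alpha_1..alpha_l, x_1^{+-1}..x_n^{+-1}], represented as
   q(alpha, x) / x^e with q a polynomial in l + n variables. *)
Record laurent (l n : nat) := Laurent {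
  lnum : {mpoly C[l + n]};
  lden : 'I_n -> nat }.

Definition joinpt (l n : nat) (a : 'I_l -> C) (x : 'I_n -> C)
  : 'I_(l + n) -> C :=
  fun i => match split i with inl j => a j | inr j => x j end.

Definition leval (l n : nat) (f : laurent l n) (a : 'I_l -> C)
  (x : 'I_n -> C) : C :=
  (lnum f).@[joinpt a x] / \prod_(i < n) x i ^+ lden f i.

Definition torus_zeros (l n s : nat) (g : 'I_s -> laurent l n)
  (a : 'I_l -> C) : ('I_n -> C) -> Prop :=
  fun x => in_torus x /\ forall j, leval (g j) a x = 0.

Definition discr_set (l n s : nat) (g : 'I_s -> laurent l n)
  (A : ('I_l -> C) -> Prop) (X : ('I_n -> C) -> Prop)
  : ('I_l -> C) -> Prop :=
  fun a => A a /\ exists x, torus_zeros g a x /\ X x.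

End Defs.

From HB Require Import structures.
From mathcomp Require Import all_boot all_order all_algebra all_field.
From mathcomp Require Import mpoly.
From mathcomp Require Import reals.
From mathcomp Require Import complex ordered_qelim qe_rcf.
From mathcomp Require Import lra.
From Stdlib Require Import FunctionalExtensionality Classical.
Import Order.TTheory GRing.Theory Num.Theory.
Local Open Scope ring_scope.
Set Implicit Arguments.
Unset Strict Implicit.
Unset Printing Implicit Defensive.

(* If D has nonempty interior in A, a ball B with B /\ A <= D is Zariski dense
   by the local Zariski density of A, hence so is D.

   Conversely, call a set Y of parameters (real or complex) generically locally
   constant when some polynomial H, not identically zero on the parameter
   space, is such that Y is constant near every point where H does not vanish.
   These sets form a Boolean algebra which contains the zero sets of complex
   polynomials and the sign conditions of real polynomials, hence every set
   defined by a quantifier-free formula.  By quantifier elimination over C and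
   over R, the condition "g_a has a zero in X on the torus" is quantifier-free,
   so in all three cases D is generically locally constant.  A Zariski dense D
   cannot lie in the zero set of H, so D contains a point where H does not
   vanish, and then a whole neighbourhood of it: D has nonempty interior. *)

Section PolynomialContinuity.
Variables (F : numFieldType) (m : nat).

Definition cont_at (f : ('I_m -> F) -> F) (y : 'I_m -> F) :=
  forall e, 0 < e -> exists2 d, 0 < d &
    forall z, (forall i, `|z i - y i| < d) -> `|f z - f y| < e.

Lemma pos_min (d1 d2 : F) : 0 < d1 -> 0 < d2 ->
  exists d, [/\ 0 < d, d <= d1 & d <= d2].
Proof.
move=> d1_gt0 d2_gt0.
have : d1 >=< d2 by rewrite real_comparable ?gtr0_real.
case/comparable_leP => [d12|d21]; first by exists d1; rewrite d1_gt0 lexx d12.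
by exists d2; rewrite d2_gt0 lexx (ltW d21).
Qed.

Lemma cont_ext f g y : (forall z, f z = g z) -> cont_at f y -> cont_at g y.
Proof.
move=> fg cf e e_gt0; have [d d_gt0 near_f] := cf e e_gt0.
by exists d => // z /near_f; rewrite !fg.
Qed.

Lemma cont_cst c y : cont_at (fun _ => c) y.
Proof. by move=> e e_gt0; exists 1 => // z _; rewrite subrr normr0. Qed.

Lemma cont_coord i y : cont_at (fun z => z i) y.
Proof. by move=> e e_gt0; exists e => // z /(_ i). Qed.

Lemma cont_add f g y :
  cont_at f y -> cont_at g y -> cont_at (fun z => f z + g z) y.
Proof.
move=> cf cg e e_gt0.
have e2_gt0 : 0 < e / 2 by rewrite divr_gt0 ?ltr0n.
have [d1 d1_gt0 near_f] := cf _ e2_gt0; have [d2 d2_gt0 near_g] := cg _ e2_gt0.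
have [d [d_gt0 dd1 dd2]] := pos_min d1_gt0 d2_gt0.
exists d => // z zy; rewrite opprD addrACA (le_lt_trans (ler_normD _ _)) //.
rewrite [e]splitr ltrD ?near_f ?near_g // => i.
  exact: lt_le_trans (zy i) dd1.
exact: lt_le_trans (zy i) dd2.
Qed.

Lemma cont_mul f g y :
  cont_at f y -> cont_at g y -> cont_at (fun z => f z * g z) y.
Proof.
move=> cf cg e e_gt0.
set a := `|g y| + 1; set b := `|f y| + 1.
have a_gt0 : 0 < a by rewrite ltr_pwDr ?ltr01 ?normr_ge0.
have b_gt0 : 0 < b by rewrite ltr_pwDr ?ltr01 ?normr_ge0.
have ea_gt0 : 0 < e / 2 / a by rewrite !divr_gt0 ?ltr0n.
have eb_gt0 : 0 < e / 2 / b by rewrite !divr_gt0 ?ltr0n.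
have [d' [d'_gt0 d'_eb d'_1]] := pos_min eb_gt0 ltr01.
have [d1 d1_gt0 near_f] := cf _ ea_gt0; have [d2 d2_gt0 near_g] := cg _ d'_gt0.
have [d [d_gt0 dd1 dd2]] := pos_min d1_gt0 d2_gt0.
exists d => // z zy.
have fz : `|f z - f y| < e / 2 / a.
  by apply: near_f => i; exact: lt_le_trans (zy i) dd1.
have gz : `|g z - g y| < d'.
  by apply: near_g => i; exact: lt_le_trans (zy i) dd2.
have gz_le_a : `|g z| <= a.
  rewrite -[g z](subrK (g y)) (le_trans (ler_normD _ _)) //.
  by rewrite addrC lerD2l ltW // (lt_le_trans gz d'_1).
rewrite (_ : f z * g z - f y * g y = (f z - f y) * g z + f y * (g z - g y));
  last by rewrite mulrBl mulrBr addrA subrK.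
apply: (le_lt_trans (ler_normD _ _)); rewrite [e]splitr normrM normrM.
apply: ltrD.
  apply: (@le_lt_trans _ _ (`|f z - f y| * a)); first by rewrite ler_wpM2l.
  by rewrite -ltr_pdivlMr.
apply: (@le_lt_trans _ _ (b * `|g z - g y|)).
  by rewrite ler_wpM2r ?normr_ge0 // lerDl ler01.
by rewrite -ltr_pdivlMl // (lt_le_trans gz) // mulrC.
Qed.

Lemma cont_sum (I : Type) (r : seq I) (P : pred I) (f : I -> ('I_m -> F) -> F) y :
  (forall i, cont_at (f i) y) -> cont_at (fun z => \sum_(i <- r | P i) f i z) y.
Proof.
move=> cf; elim: r => [|i r IH].
  by apply: (cont_ext (f := fun _ => 0)) (cont_cst _ _) => z; rewrite big_nil.
apply: (cont_ext (f := fun z => (if P i then f i z else 0) +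
                                \sum_(i <- r | P i) f i z)).
  by move=> z; rewrite big_cons; case: (P i); rewrite ?add0r.
by apply: cont_add => //; case: (P i); [apply: cf | apply: cont_cst].
Qed.

Lemma cont_prod (I : Type) (r : seq I) (P : pred I) (f : I -> ('I_m -> F) -> F) y :
  (forall i, cont_at (f i) y) -> cont_at (fun z => \prod_(i <- r | P i) f i z) y.
Proof.
move=> cf; elim: r => [|i r IH].
  by apply: (cont_ext (f := fun _ => 1)) (cont_cst _ _) => z; rewrite big_nil.
apply: (cont_ext (f := fun z => (if P i then f i z else 1) *
                                \prod_(i <- r | P i) f i z)).
  by move=> z; rewrite big_cons; case: (P i); rewrite ?mul1r.
by apply: cont_mul => //; case: (P i); [apply: cf | apply: cont_cst].
Qed.

Lemma cont_meval (p : {mpoly F[m]}) y : cont_at (fun z => p.@[z]) y.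
Proof.
apply: (cont_ext (f := fun z => \sum_(k <- msupp p) p@_k * \prod_i z i ^+ k i)).
  by move=> z; rewrite mevalE.
apply: cont_sum => k; apply: cont_mul; first exact: cont_cst.
apply: cont_prod => i.
apply: (cont_ext (f := fun z => \prod_(j < k i) z i)).
  by move=> z; rewrite prodr_const card_ord.
by apply: cont_prod => _; apply: cont_coord.
Qed.

Lemma meval_neq0_near (p : {mpoly F[m]}) y : p.@[y] != 0 ->
  exists2 d, 0 < d & forall z, (forall i, `|z i - y i| < d) -> p.@[z] != 0.
Proof.
move=> py_neq0; have := normr_gt0 (p.@[y]); rewrite py_neq0.
move=> /(cont_meval p y) [d d_gt0 near_p]; exists d => // z /near_p.
by apply: contraTneq => ->; rewrite sub0r normrN ltxx.
Qed.
End PolynomialContinuity.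

(* Two polynomials that do not
   vanish identically on the line through a and b have a common non-root among
   the points a + k (b - a), k a natural number, since their product has finitely
   many roots.  This is what makes the "generic" condition below stable under
   finite unions. *)
Section Lines.
Variables (F : numFieldType) (m : nat).

Definition line (a b : 'I_m -> F) (t : F) : 'I_m -> F :=
  fun i => a i + (b i - a i) * t.

Definition line_poly (p : {mpoly F[m]}) a b : {poly F} :=
  \sum_(k <- msupp p) p@_k *: \prod_i ((a i)%:P + (b i - a i) *: 'X) ^+ k i.

Lemma line_polyE p a b t : (line_poly p a b).[t] = p.@[line a b t].
Proof.
rewrite mevalE /line_poly horner_sum; apply: eq_bigr => k _.
rewrite hornerZ horner_prod; congr (_ * _); apply: eq_bigr => i _.
by rewrite horner_exp hornerD hornerC hornerZ hornerX.
Qed.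

Lemma line0 a b : line a b 0 = a.
Proof. by apply: functional_extensionality_dep => i; rewrite /line mulr0 addr0. Qed.

Lemma line1 a b : line a b 1 = b.
Proof. by apply: functional_extensionality_dep => i; rewrite /line mulr1 addrC subrK. Qed.

(* The product of the restrictions is a nonzero polynomial, and has fewer roots
   than the natural numbers below its size. *)
Lemma line_common_nonroot p q a b : p.@[a] != 0 -> q.@[b] != 0 ->
  exists k : nat, p.@[line a b k%:R] * q.@[line a b k%:R] != 0.
Proof.
move=> pa_neq0 qb_neq0.
have P_neq0 : line_poly p a b != 0.
  by apply: contraNneq pa_neq0 => P0; rewrite -(line0 a b) -line_polyE P0 horner0.
have Q_neq0 : line_poly q a b != 0.
  by apply: contraNneq qb_neq0 => Q0; rewrite -(line1 a b) -line_polyE Q0 horner0.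
have PQ_neq0 : line_poly p a b * line_poly q a b != 0 by rewrite mulf_neq0.
apply: NNPP => all_roots.
pose ks := [seq (k%:R : F) | k <- iota 0 (size (line_poly p a b * line_poly q a b))].
suff : (size ks < size (line_poly p a b * line_poly q a b)%R)%N.
  by rewrite size_map size_iota ltnn.
apply: max_poly_roots PQ_neq0 _ _.
  apply/allP => x /mapP [k _ ->]; rewrite /root hornerM !line_polyE.
  by apply/negPn/negP => k_nonroot; apply: all_roots; exists k.
by rewrite map_inj_uniq ?iota_uniq // => i j /eqP; rewrite eqr_nat => /eqP.
Qed.
End Lines.

(* Points of T^m as sequences, the format of environments of first-order
   formulas. *)
Definition seq_of_pt (T : Type) (m : nat) (z : 'I_m -> T) : seq T :=
  [seq z i | i <- enum 'I_m].

Definition pt_of_seq (T : Type) (x0 : T) (m : nat) (w : seq T) : 'I_m -> T :=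
  fun i => nth x0 w i.
Arguments pt_of_seq {T} x0 m w.

Lemma size_seq_of_pt T m (z : 'I_m -> T) : size (seq_of_pt z) = m.
Proof. by rewrite size_map size_enum_ord. Qed.

Lemma nth_seq_of_pt T m (z : 'I_m -> T) (i : 'I_m) x0 : nth x0 (seq_of_pt z) i = z i.
Proof. by rewrite (nth_map i) ?size_enum_ord ?ltn_ord // nth_ord_enum. Qed.

Lemma seq_of_ptK T (x0 : T) m (z : 'I_m -> T) : pt_of_seq x0 m (seq_of_pt z) = z.
Proof.
by apply: functional_extensionality_dep => i; rewrite /pt_of_seq nth_seq_of_pt.
Qed.

Lemma nth_cat_shift (T : Type) (x0 : T) (e w : seq T) k (i : nat) :
  size e = k -> nth x0 (e ++ w) (k + i) = nth x0 w i.
Proof. by move=> <-; rewrite nth_cat ltnNge leq_addr /= addKn. Qed.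

Lemma exists_pt_seq T (x0 : T) n (P : ('I_n -> T) -> Prop) :
  (exists x, P x) <-> exists w, size w = n /\ P (pt_of_seq x0 n w).
Proof.
split=> [[x Px]|[w [_ Pw]]]; last by exists (pt_of_seq x0 n w).
by exists (seq_of_pt x); rewrite size_seq_of_pt seq_of_ptK.
Qed.

Section TermsPolynomials.
Variables (F : fieldType) (m : nat).

Fixpoint mpoly_of_term (t : GRing.term F) : {mpoly F[m]} :=
  match t with
  | GRing.Var i => if insub i is Some j then 'X_j else 0
  | GRing.Const c => c%:MP
  | GRing.NatConst n => n%:R
  | GRing.Add u v => mpoly_of_term u + mpoly_of_term v
  | GRing.Opp u => - mpoly_of_term u
  | GRing.NatMul u n => mpoly_of_term u *+ n
  | GRing.Mul u v => mpoly_of_term u * mpoly_of_term v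
  | GRing.Inv u => 0
  | GRing.Exp u n => mpoly_of_term u ^+ n
  end.

Lemma mpoly_of_termE t (z : 'I_m -> F) :
  GRing.rterm t -> (mpoly_of_term t).@[z] = GRing.eval (seq_of_pt z) t.
Proof.
elim: t => //=.
- move=> i _; case: insubP => [j _ <-|]; first by rewrite mevalXU nth_seq_of_pt.
  by rewrite -leqNgt => i_ge; rewrite meval0 nth_default // size_seq_of_pt.
- by move=> c _; rewrite mevalC.
- by move=> n _; rewrite rmorph_nat.
- by move=> u IHu v IHv /andP[ru rv]; rewrite mevalD IHu ?IHv.
- by move=> u IHu ru; rewrite mevalN IHu.
- by move=> u IHu n ru; rewrite mevalMn IHu.
- by move=> u IHu v IHv /andP[ru rv]; rewrite mevalM IHu ?IHv.
- by move=> u IHu n ru; rewrite rmorphXn -IHu.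
Qed.

Definition term_of_mpoly (f : 'I_m -> nat) (p : {mpoly F[m]}) : GRing.term F :=
  \big[GRing.Add/GRing.Const 0]_(k <- msupp p)
    GRing.Mul (GRing.Const p@_k)
      (\big[GRing.Mul/GRing.Const 1]_(i < m) GRing.Exp (GRing.Var F (f i)) (k i)).

Lemma term_of_mpolyE e f p :
  GRing.eval e (term_of_mpoly f p) = p.@[fun i => nth 0 e (f i)].
Proof.
rewrite mevalE /term_of_mpoly.
rewrite (big_morph (GRing.eval e) (id1 := 0) (op1 := +%R)) //.
apply: eq_bigr => k _ /=; congr (_ * _).
by rewrite (big_morph (GRing.eval e) (id1 := 1) (op1 := *%R)).
Qed.
End TermsPolynomials.

(* K is a numeric field embedded in C by a
   ring morphism iota (in practice K = R or K = C). *)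
Section GenericallyLocallyConstant.
Variables (R : realType) (K : numFieldType) (iota : {rmorphism K -> R[i]}).
Variable l : nat.

Definition embed (y : 'I_l -> K) : 'I_l -> R[i] := fun i => iota (y i).

Definition near (y z : 'I_l -> K) (d : K) := forall i, `|z i - y i| < d.

Definition generically_locally_constant (Y : ('I_l -> K) -> Prop) :=
  exists H : {mpoly R[i][l]}, (exists y, H.@[embed y] != 0) /\
    forall y, H.@[embed y] != 0 -> exists2 d, 0 < d &
      forall z, near y z d -> (Y z <-> Y y).

Local Notation glc := generically_locally_constant.

Lemma near_le y z d d' : d <= d' -> near y z d -> near y z d'.
Proof. by move=> dd' yz i; exact: lt_le_trans (yz i) dd'. Qed.

Lemma glc_ext Y Y' : (forall z, Y z <-> Y' z) -> glc Y -> glc Y'.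
Proof.
move=> YY' [H [H_neq0 Hconst]]; exists H; split => // y /Hconst [d d_gt0 Yconst].
by exists d => // z /Yconst; rewrite !YY'.
Qed.

Lemma glc_const (P : Prop) : glc (fun _ => P).
Proof.
exists 1; split; first by exists (fun _ => 0); rewrite meval1 oner_eq0.
by move=> y _; exists 1 => //; rewrite ltr01.
Qed.

Lemma glc_not Y : glc Y -> glc (fun z => ~ Y z).
Proof.
move=> [H [H_neq0 Hconst]]; exists H; split => // y /Hconst [d d_gt0 Yconst].
by exists d => // z /Yconst ->.
Qed.

Lemma embed_line y1 y2 (k : nat) :
  line (embed y1) (embed y2) k%:R = embed (line y1 y2 k%:R).
Proof.
apply: functional_extensionality_dep => i.
by rewrite /line /embed rmorphD rmorphM rmorphB rmorph_nat.
Qed.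

(* The product H1 H2 of the two witnesses works for the union; it does not
   vanish identically on K^l by line_common_nonroot. *)
Lemma glc_or Y1 Y2 : glc Y1 -> glc Y2 -> glc (fun z => Y1 z \/ Y2 z).
Proof.
move=> [H1 [[y1 H1y1] H1const]] [H2 [[y2 H2y2] H2const]].
exists (H1 * H2); split.
  have [k Hk] := line_common_nonroot H1y1 H2y2.
  by exists (line y1 y2 k%:R); rewrite mevalM -embed_line.
move=> y; rewrite mevalM mulf_eq0 negb_or => /andP[/H1const [d1 d1_gt0 Y1const]].
move=> /H2const [d2 d2_gt0 Y2const].
have [d [d_gt0 dd1 dd2]] := pos_min d1_gt0 d2_gt0.
exists d => // z yz.
by rewrite (Y1const z (near_le dd1 yz)) (Y2const z (near_le dd2 yz)).
Qed.

Lemma glc_and Y1 Y2 : glc Y1 -> glc Y2 -> glc (fun z => Y1 z /\ Y2 z).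
Proof.
move=> glc1 glc2.
apply: (glc_ext (Y := fun z => ~ ((~ Y1 z) \/ (~ Y2 z)))); first by move=> z; tauto.
by apply/glc_not/glc_or; apply: glc_not.
Qed.

(* The continuity of iota at 0, which transports neighbourhoods of C back
   to K, is needed to see that non-vanishing loci of polynomials are open. *)
Hypothesis iota_cont : forall d : R[i], 0 < d ->
  exists2 d' : K, 0 < d' & forall a : K, `|a| < d' -> `|iota a| < d.

Lemma embed_neq0_near (H : {mpoly R[i][l]}) y : H.@[embed y] != 0 ->
  exists2 d, 0 < d & forall z, near y z d -> H.@[embed z] != 0.
Proof.
move=> /meval_neq0_near [dC dC_gt0 H_neq0]; have [d d_gt0 iota_d] := iota_cont dC_gt0.
by exists d => // z yz; apply: H_neq0 => i; rewrite /embed -rmorphB iota_d.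
Qed.

(* A zero set is constant near each point off itself; H0 itself is the witness,
   unless H0 vanishes on all of K^l, in which case the set is everything. *)
Lemma glc_zero (H0 : {mpoly R[i][l]}) : glc (fun z => H0.@[embed z] = 0).
Proof.
have [[y0 H0y0]|H0_eq0] := classic (exists y, H0.@[embed y] != 0).
  exists H0; split; first by exists y0.
  move=> y H0y; have [d d_gt0 H0_neq0] := embed_neq0_near H0y.
  exists d => // z /H0_neq0 H0z; split => /eqP; by rewrite ?(negbTE H0z) ?(negbTE H0y).
apply: (glc_ext (Y := fun _ => Logic.True)); last exact: glc_const.
move=> z; split => // _.
by apply/eqP; apply: NNPP => H0z; apply: H0_eq0; exists z; apply/negP.
Qed.

(* A generically locally constant set which is Zariski dense (through iota)
   meets the locus H <> 0, hence contains a neighbourhood of one of its points. *)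
Lemma glc_dense_interior Y : glc Y ->
  zariski_dense (fun x => exists y, Y y /\ x = embed y) ->
  exists y, Y y /\ exists2 d, 0 < d & forall z, near y z d -> Y z.
Proof.
move=> [H [[y0 Hy0] Hconst]] Y_dense.
have [y [Yy Hy]] : exists y, Y y /\ H.@[embed y] != 0.
  apply: NNPP => H_zero_on_Y; move: Hy0; apply/negP/negPn/eqP.
  apply: (Y_dense (embed y0) (fun p => p = H)) => // _ -> _ [y [Yy ->]].
  by apply/eqP; apply: NNPP => Hy; apply: H_zero_on_Y; exists y; split => //; apply/negP.
have [d d_gt0 Yconst] := Hconst _ Hy.
by exists y; split => //; exists d => // z /Yconst ->.
Qed.
End GenericallyLocallyConstant.

Section QuantifierFreeComplex.
Variables (R : realType) (K : numFieldType) (iota : {rmorphism K -> R[i]}).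
Hypothesis iota_cont : forall d : R[i], 0 < d ->
  exists2 d' : K, 0 < d' & forall a : K, `|a| < d' -> `|iota a| < d.
Variable l : nat.

Local Notation glc := (generically_locally_constant iota).
Local Notation qf_set f :=
  (fun z : 'I_l -> K => GRing.qf_eval (seq_of_pt (embed iota z)) f).

Lemma glc_qf (f : GRing.formula R[i]) :
  GRing.qf_form f -> GRing.rformula f -> glc (qf_set f).
Proof.
elim: f => //=.
- by move=> b _ _; apply: glc_const.
- move=> t1 t2 _ /andP[rt1 rt2].
  apply: (glc_ext (Y := fun z =>
     (mpoly_of_term l t1 - mpoly_of_term l t2).@[embed iota z] = 0)).
    move=> z; rewrite mevalB !mpoly_of_termE //.
    by split => [t12|/eqP ->]; [rewrite -subr_eq0 t12 | rewrite subrr].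
  exact: glc_zero.
- move=> f1 IH1 f2 IH2 /andP[q1 q2] /andP[r1 r2].
  apply: (glc_ext (Y := fun z => qf_set f1 z /\ qf_set f2 z)).
    by move=> z; split => [[-> ->]|/andP].
  exact: glc_and (IH1 q1 r1) (IH2 q2 r2).
- move=> f1 IH1 f2 IH2 /andP[q1 q2] /andP[r1 r2].
  apply: (glc_ext (Y := fun z => qf_set f1 z \/ qf_set f2 z)).
    by move=> z; split => [[->|->]|/orP] //; rewrite orbT.
  exact: glc_or (IH1 q1 r1) (IH2 q2 r2).
- move=> f1 IH1 f2 IH2 /andP[q1 q2] /andP[r1 r2].
  apply: (glc_ext (Y := fun z => ~ qf_set f1 z \/ qf_set f2 z)).
    move=> z; case: (qf_set f1 z); case: (qf_set f2 z) => /=; split => //;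
    by [left | right | case].
  exact: glc_or (glc_not (IH1 q1 r1)) (IH2 q2 r2).
- move=> f1 IH1 q1 r1.
  apply: (glc_ext (Y := fun z => ~ qf_set f1 z)).
    by move=> z; case: (qf_set f1 z); split.
  exact: glc_not (IH1 q1 r1).
Qed.
End QuantifierFreeComplex.

Section Embeddings.
Variable R : realType.

Lemma id_cont (d : R[i]) : 0 < d -> exists2 d' : R[i], 0 < d' &
  forall a : R[i], `|a| < d' -> `|(idfun : {rmorphism R[i] -> R[i]}) a| < d.
Proof. by move=> d_gt0; exists d. Qed.

Lemma real_complex_cont (d : R[i]) : 0 < d -> exists2 d' : R, 0 < d' &
  forall a : R, `|a| < d' -> `|real_complex R a| < d.
Proof.
case: d => a b; rewrite ltcE /= => /andP[/eqP -> a_gt0].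
exists a => // x x_lt_a.
by rewrite normc_def ltcE /= eqxx /= expr0n /= addr0 sqrtr_sqr.
Qed.
End Embeddings.

Lemma glc_constructible (R : realType) (l : nat) (A : ('I_l -> R[i]) -> Prop) :
  constructible A -> generically_locally_constant (idfun : {rmorphism R[i] -> R[i]}) A.
Proof.
elim => {A}.
- by move=> p; apply: (glc_zero (@id_cont R) p).
- by move=> S T _ glcS _ glcT; apply: glc_or.
- by move=> S _ glcS; apply: glc_not.
- by move=> S T ST _ glcS; apply: glc_ext glcS.
Qed.

(* Over R, the sign of a real polynomial is locally constant off its zero set,
   so every set determined by the sign of a polynomial, hence every semialgebraic
   set and every quantifier-free formula of ordered fields, is generically
   locally constant. *)
Section RealSets.
Variables (R : realType) (l : nat).
Local Notation iR := (real_complex R).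
Local Notation glc := (generically_locally_constant iR).

Definition complexify (P : {mpoly R[l]}) : {mpoly R[i][l]} :=
  \sum_(k <- msupp P) (iR P@_k) *: 'X_[k].

Lemma complexifyE P (y : 'I_l -> R) : (complexify P).@[embed iR y] = iR (P.@[y]).
Proof.
rewrite [in RHS]mevalE rmorph_sum /complexify raddf_sum /=; apply: eq_bigr => k _.
rewrite mevalZ mevalX rmorphM rmorph_prod; congr (_ * _).
by apply: eq_bigr => i _; rewrite rmorphXn.
Qed.

Lemma sgr_near (a b : R) : `|a - b| < `|b| -> Num.sg a = Num.sg b.
Proof.
rewrite ltr_norml => /andP[h1 h2].
case: (ltrgtP 0 b) => b0.
- by rewrite gtr0_norm // in h1 h2; rewrite !gtr0_sg //; lra.
- by rewrite ltr0_norm // in h1 h2; rewrite !ltr0_sg //; lra.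
- by rewrite -b0 normr0 in h1 h2; lra.
Qed.

(* A set determined by the sign of P is witnessed by the complexification of P. *)
Lemma glc_sign (P : {mpoly R[l]}) (Y : ('I_l -> R) -> Prop) :
  (forall z z', Num.sg P.@[z] = Num.sg P.@[z'] -> (Y z <-> Y z')) -> glc Y.
Proof.
move=> Y_sign.
have [[y0 Py0]|P_eq0] := classic (exists y, P.@[y] != 0).
  exists (complexify P); split; first by exists y0; rewrite complexifyE fmorph_eq0.
  move=> y; rewrite complexifyE fmorph_eq0 => Py.
  have := normr_gt0 (P.@[y]); rewrite Py => /(cont_meval P y) [d d_gt0 near_P].
  by exists d => // z /near_P /sgr_near; apply: Y_sign.
apply: (glc_ext (Y := fun _ => Y (fun _ => 0))); last exact: glc_const.
have P0 z : P.@[z] = 0.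
  by apply/eqP; apply: NNPP => Pz; apply: P_eq0; exists z; apply/negP.
by move=> z; apply: Y_sign; rewrite !P0.
Qed.

Lemma glc_semialgebraic (S : ('I_l -> R) -> Prop) : semialgebraic S -> glc S.
Proof.
elim => {S}.
- by move=> p; apply: (glc_sign (P := p)) => z z' sgz; rewrite -!sgr_cp0 sgz.
- by move=> S T _ glcS _ glcT; apply: glc_or.
- by move=> S _ glcS; apply: glc_not.
- by move=> S T ST _ glcS; apply: glc_ext glcS.
Qed.

Local Notation qf_set f := (fun z : 'I_l -> R => ord.qf_eval (seq_of_pt z) f).

(* An atomic comparison t1 ? t2 only depends on the sign of t2 - t1. *)
Lemma glc_atom (t1 t2 : GRing.term R) (cmp : R -> R -> bool) :
  GRing.rterm t1 -> GRing.rterm t2 ->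
  (forall u v u' v' : R, Num.sg (v - u) = Num.sg (v' - u') -> cmp u v = cmp u' v') ->
  glc (fun z : 'I_l -> R =>
         cmp (GRing.eval (seq_of_pt z) t1) (GRing.eval (seq_of_pt z) t2)).
Proof.
move=> rt1 rt2 cmp_sign.
apply: (glc_sign (P := mpoly_of_term l t2 - mpoly_of_term l t1)) => z z'.
by rewrite !mevalB !mpoly_of_termE // => /cmp_sign ->.
Qed.

Lemma glc_oqf (f : ord.formula R) : ord.qf_form f -> ord.rformula f -> glc (qf_set f).
Proof.
elim: f => //=.
- by move=> b _ _; apply: glc_const.
- move=> t1 t2 _ /andP[rt1 rt2]; apply: (glc_atom (cmp := eq_op)) => // u v u' v' sg.
  by rewrite eq_sym -subr_eq0 -sgr_eq0 sg sgr_eq0 subr_eq0 eq_sym.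
- move=> t1 t2 _ /andP[rt1 rt2]; apply: (glc_atom (cmp := <%R)) => // u v u' v' sg.
  by rewrite -subr_gt0 -sgr_cp0 sg sgr_cp0 subr_gt0.
- move=> t1 t2 _ /andP[rt1 rt2]; apply: (glc_atom (cmp := <=%R)) => // u v u' v' sg.
  by rewrite -subr_ge0 -[RHS]subr_ge0 !real_leNgt ?rpred0 ?num_real // -!sgr_cp0 sg.
- move=> f1 IH1 f2 IH2 /andP[q1 q2] /andP[r1 r2].
  apply: (glc_ext (Y := fun z => qf_set f1 z /\ qf_set f2 z)).
    by move=> z; split => [[-> ->]|/andP].
  exact: glc_and (IH1 q1 r1) (IH2 q2 r2).
- move=> f1 IH1 f2 IH2 /andP[q1 q2] /andP[r1 r2].
  apply: (glc_ext (Y := fun z => qf_set f1 z \/ qf_set f2 z)).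
    by move=> z; split => [[->|->]|/orP] //; rewrite orbT.
  exact: glc_or (IH1 q1 r1) (IH2 q2 r2).
- move=> f1 IH1 f2 IH2 /andP[q1 q2] /andP[r1 r2].
  apply: (glc_ext (Y := fun z => ~ qf_set f1 z \/ qf_set f2 z)).
    move=> z; case: (qf_set f1 z); case: (qf_set f2 z) => /=; split => //;
    by [left | right | case].
  exact: glc_or (glc_not (IH1 q1 r1)) (IH2 q2 r2).
- move=> f1 IH1 q1 r1.
  apply: (glc_ext (Y := fun z => ~ qf_set f1 z)).
    by move=> z; case: (qf_set f1 z); split.
  exact: glc_not (IH1 q1 r1).
Qed.
End RealSets.

Section Balls.
Variable R : realType.
Local Notation normc := (@ComplexField.Normc.normc R).
Local Notation iR := (real_complex R).
Variable m : nat.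

Lemma normc_ge0 (z : R[i]) : 0 <= normc z.
Proof. by case: z => a b; rewrite /= sqrtr_ge0. Qed.

Lemma normc_real (a : R) : normc (iR a) = `|a|.
Proof. by rewrite /= expr0n /= addr0 sqrtr_sqr. Qed.

Lemma eballE (c x : 'I_m -> R[i]) (r : R) :
  eball c r x <-> \sum_i normc (x i - c i) ^+ 2 < r ^+ 2.
Proof.
rewrite /eball.
have -> : \sum_(i < m) `|x i - c i| ^+ 2 = iR (\sum_i normc (x i - c i) ^+ 2).
  by rewrite rmorph_sum; apply: eq_bigr => i _; rewrite rmorphXn.
by rewrite ltcR.
Qed.

Lemma eball_coord (c x : 'I_m -> R[i]) (r : R) (i : 'I_m) :
  0 < r -> eball c r x -> normc (x i - c i) < r.
Proof.
move=> r_gt0 /eballE x_in.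
have : normc (x i - c i) ^+ 2 < r ^+ 2.
  apply: le_lt_trans x_in; rewrite (bigD1 i) //= lerDl sumr_ge0 // => j _.
  by rewrite exprn_ge0 ?normc_ge0.
by rewrite ltr_pXn2r // qualifE /= ?normc_ge0 ?ltW.
Qed.

Lemma eball_center (c : 'I_m -> R[i]) (r : R) : 0 < r -> eball c r c.
Proof.
move=> r_gt0; apply/eballE; rewrite big1 ?exprn_gt0 // => i _.
by rewrite subrr ComplexField.Normc.normc0 expr0n.
Qed.

(* Around x in the ball B(c, r), the ball of radius rho = min(1, q) with
   q = (r^2 - |x - c|^2) / (M + 1) fits in B(c, r), where M bounds the
   linear part of the expansion of |y - c|^2 around x. *)
Lemma eopen_eball (c : 'I_m -> R[i]) (r : R) : eopen (eball c r).
Proof.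
move=> x /eballE x_in.
set s := \sum_i normc (x i - c i) ^+ 2 in x_in.
set M := \sum_(i < m) (2 * normc (x i - c i) + 1).
have M_ge0 : 0 <= M.
  by rewrite sumr_ge0 // => i _; have := normc_ge0 (x i - c i); lra.
set q := (r ^+ 2 - s) / (M + 1); set rho := Num.min 1 q.
have q_gt0 : 0 < q by rewrite divr_gt0 //; lra.
have rho_gt0 : 0 < rho by rewrite lt_min ltr01 q_gt0.
have rho_le1 : rho <= 1 by rewrite ge_min lexx.
have rho_leq : rho <= q by rewrite ge_min lexx orbT.
exists rho; split => // y y_in; apply/eballE.
apply: (@le_lt_trans _ _ (s + rho * M)).
  rewrite /s /M mulr_sumr -big_split /=; apply: ler_sum => i _.
  have yx := eball_coord i rho_gt0 y_in.
  have triangle : normc (y i - c i) <= normc (y i - x i) + normc (x i - c i).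
    by rewrite (le_trans _ (le_normcD _ _)) // addrA subrK.
  have := normc_ge0 (y i - c i); have := normc_ge0 (x i - c i).
  have := normc_ge0 (y i - x i); nra.
have : rho * M <= q * M by rewrite ler_wpM2r.
have : q * M < r ^+ 2 - s.
  by rewrite /q mulrAC ltr_pdivrMr ?ltr_pM2l; lra.
lra.
Qed.
End Balls.

Section Directions.
Variables (R : realType) (l : nat).
Local Notation iR := (real_complex R).
Local Notation iC := (idfun : {rmorphism R[i] -> R[i]}).

Lemma zariski_dense_ext (X X' : ('I_l -> R[i]) -> Prop) :
  (forall x, X x <-> X' x) -> zariski_dense X -> zariski_dense X'.
Proof.
by move=> XX' X_dense x S S_vanish; apply: X_dense => p Sp y /XX'; apply: S_vanish.
Qed.

(* If a ball B satisfies B /\ A <> empty and B /\ A <= D, then B /\ A is Zariski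
   dense by local density of A, hence so is D. *)
Lemma interior_zariski_dense (A D : ('I_l -> R[i]) -> Prop) :
  locally_zariski_dense A -> nonempty_interior_in A D -> zariski_dense D.
Proof.
move=> A_ldense [c [r [r_gt0 [[x0 [x0_in Ax0]] BA_D]]]].
have BA_dense := A_ldense _ (@eopen_eball R l c r) (ex_intro _ x0 (conj x0_in Ax0)).
move=> x S S_vanish; apply: BA_dense => p Sp y [y_in Ay].
exact: S_vanish p Sp y (BA_D y y_in Ay).
Qed.

(* A Zariski dense, generically locally constant D contains a box around one of
   its points, and the box contains a ball. *)
Lemma dense_interior_complex (A D : ('I_l -> R[i]) -> Prop) :
  (forall x, D x -> A x) -> generically_locally_constant iC D ->
  zariski_dense D -> nonempty_interior_in A D.
Proof.
move=> DA glcD D_dense.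
have D_dense' : zariski_dense (fun x => exists y, D y /\ x = embed iC y).
  by apply: zariski_dense_ext D_dense => x; split => [Dx|[y [Dy ->]]]; first exists x.
have [y [Dy [d d_gt0 near_D]]] := glc_dense_interior glcD D_dense'.
move: d_gt0; rewrite ltcE /= => /andP[/eqP d_real d_gt0].
exists y, (complex.Re d); split => //; split.
  by exists y; split; [apply: eball_center | apply: DA].
move=> x x_in _; apply: near_D => i; move: x_in; case: d d_real d_gt0 => a b /= -> a_gt0.
by move/(eball_coord i a_gt0); rewrite -ltcR.
Qed.

Lemma dense_interior_real (A D : ('I_l -> R[i]) -> Prop) :
  (forall x, D x -> A x) -> (forall x, A x -> exists y, x = realpt y) ->
  generically_locally_constant iR (fun y => D (realpt y)) ->
  zariski_dense D -> nonempty_interior_in A D.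
Proof.
move=> DA A_real glcD D_dense.
have D_dense' : zariski_dense (fun x => exists y, D (realpt y) /\ x = embed iR y).
  apply: zariski_dense_ext D_dense => x; split => [Dx|[y [Dy ->]]] //.
  by have [y x_eq] := A_real x (DA x Dx); subst x; exists y.
have [y [Dy [d d_gt0 near_D]]] := glc_dense_interior glcD D_dense'.
exists (realpt y), d; split => //; split.
  by exists (realpt y); split; [apply: eball_center | apply: DA].
move=> x x_in Ax; have [y' x_eq] := A_real x Ax; subst x.
apply: near_D => i; have := eball_coord i d_gt0 x_in.
by rewrite /realpt -rmorphB normc_real.
Qed.
End Directions.

Section QuantifierElimination.
Variable R : realType.

Lemma complex_qe (f : GRing.formula R[i]) : exists f',
  GRing.qf_form f' && GRing.rformula f' /\
  forall e, GRing.holds e f <-> GRing.qf_eval e f'.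
Proof.
exists (GRing.quantifier_elim (@ClosedFieldQE.ex_elim R[i]) (GRing.to_rform f)).
split.
  exact: (GRing.quantifier_elim_wf (@ClosedFieldQE.wf_ex_elim _)
            (GRing.to_rform_rformula f)).
move=> e; rewrite -GRing.to_rformP; apply: rwP; apply: GRing.quantifier_elim_rformP.
- exact: ClosedFieldQE.wf_ex_elim.
- exact: (ClosedFieldQE.holds_ex_elim (@complex_acf_axiom R)).
- exact: GRing.to_rform_rformula.
Qed.

Lemma real_qe (f : ord.formula R) : exists f',
  ord.qf_form f' && ord.rformula f' /\
  forall e, ord.holds e f <-> ord.qf_eval e f'.
Proof.
exists (ord.quantifier_elim (@wproj R) (ord.to_rform f)).
split; first exact: (ord.quantifier_elim_wf (@wf_QE_wproj R) (ord.to_rform_rformula f)).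
move=> e; rewrite -ord.to_rformP; apply: rwP; apply: ord.quantifier_elim_rformP.
- exact: wf_QE_wproj.
- exact: valid_QE_wproj.
- exact: ord.to_rform_rformula.
Qed.
End QuantifierElimination.

Lemma set_nth_size (T : Type) (x0 : T) (e : seq T) x :
  set_nth x0 e (size e) x = e ++ [:: x].
Proof. by elim: e => //= a e ->. Qed.

(* For a system g with a zero x on the torus, the denominators x^e do not vanish,
   so g_a(x) = 0 amounts to the vanishing of the numerators. *)
Lemma leval_eq0 (R : realType) (l n : nat) (f : laurent R l n) a (x : 'I_n -> R[i]) :
  in_torus x -> (leval f a x = 0 <-> (lnum f).@[joinpt a x] = 0).
Proof.
move=> x_torus; rewrite /leval.
have den_neq0 : \prod_(i < n) x i ^+ lden f i != 0.
  by rewrite prodf_seq_neq0; apply/allP => i _; rewrite expf_neq0 ?x_torus.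
split => [/eqP|->]; last by rewrite mul0r.
by rewrite mulf_eq0 invr_eq0 (negbTE den_neq0) orbF => /eqP.
Qed.

Section ComplexDefinability.
Variable R : realType.
Local Notation C := (R[i]).

Fixpoint exists_block (k n : nat) (f : GRing.formula C) :=
  if n is n'.+1 then GRing.Exists k (exists_block k.+1 n' f) else f.

Lemma holds_exists_block n : forall e k f, size e = k ->
  (GRing.holds e (exists_block k n f) <->
   exists w, size w = n /\ GRing.holds (e ++ w) f).
Proof.
elim: n => [|n IH] e k f e_size /=.
  split => [ef|[w [/size0nil -> ef]]]; last by rewrite cats0 in ef.
  by exists [::]; rewrite cats0.
split=> [[x]|[[|x w] [//= [w_size] ewf]]].
  rewrite -e_size set_nth_size IH ?size_cat ?e_size ?addn1 // => -[w [w_size ewf]].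
  by rewrite -catA in ewf; exists (x :: w); rewrite /= w_size.
exists x; rewrite -e_size set_nth_size IH ?size_cat ?e_size ?addn1 //.
by exists w; rewrite -catA.
Qed.

Definition all_block (T : Type) (s : seq T) (F : T -> GRing.formula C) :=
  foldr (fun x f => GRing.And (F x) f) (GRing.Bool true) s.

Lemma holds_all_block (T : eqType) e (s : seq T) F :
  GRing.holds e (all_block s F) <-> forall x, x \in s -> GRing.holds e (F x).
Proof.
elim: s => [|x s IH] /=; first by split.
rewrite IH; split => [[Fx Fs] y|Fs]; first by rewrite in_cons => /orP[/eqP ->|/Fs].
by split=> [|y ys]; apply: Fs; rewrite ?mem_head ?in_cons ?ys ?orbT.
Qed.

Lemma constructible_formula (m k : nat) (X : ('I_m -> C) -> Prop) :
  constructible X -> exists f : GRing.formula C,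
    forall e, X (fun i => nth 0 e (k + i)) <-> GRing.holds e f.
Proof.
elim => {X}.
- move=> p.
  exists (GRing.Equal (term_of_mpoly (fun i : 'I_m => k + i) p) (GRing.Const 0)).
  by move=> e /=; rewrite term_of_mpolyE.
- by move=> S T _ [fS hS] _ [fT hT]; exists (GRing.Or fS fT) => e /=; rewrite hS hT.
- by move=> S _ [fS hS]; exists (GRing.Not fS) => e /=; rewrite hS.
- by move=> S T ST _ [fS hS]; exists fS => e; rewrite -hS ST.
Qed.

Variables (l n s : nat) (g : 'I_s -> laurent R l n).

Lemma joinpt_seq (a : 'I_l -> C) (w : seq C) :
  joinpt a (pt_of_seq 0 n w) = pt_of_seq 0 (l + n) (seq_of_pt a ++ w).
Proof.
apply: functional_extensionality_dep => i; rewrite /joinpt /pt_of_seq.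
case: splitP => j ->; last by rewrite nth_cat_shift ?size_seq_of_pt.
by rewrite nth_cat size_seq_of_pt ltn_ord nth_seq_of_pt.
Qed.

(* "x in (C^* )^n /\ g(a, x) = 0", x being the last n variables. *)
Definition torus_zeros_formula : GRing.formula C :=
  GRing.And
    (all_block (enum 'I_n)
       (fun i => GRing.Not (GRing.Equal (GRing.Var _ (l + i)) (GRing.Const 0))))
    (all_block (enum 'I_s)
       (fun j => GRing.Equal (term_of_mpoly (@nat_of_ord _) (lnum (g j)))
                             (GRing.Const 0))).

Lemma holds_torus_zeros_formula a w :
  GRing.holds (seq_of_pt a ++ w) torus_zeros_formula <->
  torus_zeros g a (pt_of_seq 0 n w).
Proof.
rewrite /= !holds_all_block /torus_zeros /in_torus.
have torusE : (forall i, i \in enum 'I_n -> GRing.holds (seq_of_pt a ++ w)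
      (GRing.Not (GRing.Equal (GRing.Var _ (l + i)) (GRing.Const 0)))) <->
    (forall i : 'I_n, pt_of_seq 0 n w i != 0).
  split=> [w_neq0 i|w_neq0 i _ /=]; rewrite ?nth_cat_shift ?size_seq_of_pt //.
    have /= := w_neq0 i (mem_enum _ i).
    by rewrite nth_cat_shift ?size_seq_of_pt // => /eqP.
  exact/eqP/w_neq0.
rewrite torusE; split=> [[w_neq0 g0]|[w_neq0 g0]]; split=> // j.
  rewrite leval_eq0 // joinpt_seq.
  by have := g0 j (mem_enum _ j); rewrite /= term_of_mpolyE.
by move=> _ /=; rewrite term_of_mpolyE; have := g0 j; rewrite leval_eq0 // joinpt_seq.
Qed.

Lemma projection_formula (X : ('I_n -> C) -> Prop) : constructible X ->
  exists f : GRing.formula C, forall a : 'I_l -> C,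
    (exists x, torus_zeros g a x /\ X x) <-> GRing.holds (seq_of_pt a) f.
Proof.
move=> /(constructible_formula l) [fX hX].
exists (exists_block l n (GRing.And fX torus_zeros_formula)) => a.
rewrite holds_exists_block ?size_seq_of_pt // (exists_pt_seq 0).
have shiftE w : (fun i : 'I_n => nth 0 (seq_of_pt a ++ w) (l + i)) = pt_of_seq 0 n w.
  by apply: functional_extensionality_dep => i; rewrite nth_cat_shift ?size_seq_of_pt.
split=> -[w [w_size w_in]]; exists w; split => //.
  by case: w_in => zw Xw; split; [rewrite -hX shiftE | apply/holds_torus_zeros_formula].
by case: w_in => Xw /holds_torus_zeros_formula zw; split; rewrite // -shiftE hX.
Qed.
End ComplexDefinability.

(* First-order definability over R, for real parameters y and a set X of real
   points: a complex equation g(y, x) = 0 at a real point is the pair of real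
   equations Re g = 0, Im g = 0. *)
Section RealDefinability.
Variable R : realType.
Local Notation C := (R[i]).
Local Notation iR := (real_complex R).

Fixpoint oexists_block (k n : nat) (f : ord.formula R) :=
  if n is n'.+1 then ord.Exists k (oexists_block k.+1 n' f) else f.

Lemma holds_oexists_block n : forall e k f, size e = k ->
  (ord.holds e (oexists_block k n f) <->
   exists w, size w = n /\ ord.holds (e ++ w) f).
Proof.
elim: n => [|n IH] e k f e_size /=.
  split => [ef|[w [/size0nil -> ef]]]; last by rewrite cats0 in ef.
  by exists [::]; rewrite cats0.
split=> [[x]|[[|x w] [//= [w_size] ewf]]].
  rewrite -e_size set_nth_size IH ?size_cat ?e_size ?addn1 // => -[w [w_size ewf]].
  by rewrite -catA in ewf; exists (x :: w); rewrite /= w_size.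
exists x; rewrite -e_size set_nth_size IH ?size_cat ?e_size ?addn1 //.
by exists w; rewrite -catA.
Qed.

Definition oall_block (T : Type) (s : seq T) (F : T -> ord.formula R) :=
  foldr (fun x f => ord.And (F x) f) (ord.Bool true) s.

Lemma holds_oall_block (T : eqType) e (s : seq T) F :
  ord.holds e (oall_block s F) <-> forall x, x \in s -> ord.holds e (F x).
Proof.
elim: s => [|x s IH] /=; first by split.
rewrite IH; split => [[Fx Fs] y|Fs]; first by rewrite in_cons => /orP[/eqP ->|/Fs].
by split=> [|y ys]; apply: Fs; rewrite ?mem_head ?in_cons ?ys ?orbT.
Qed.

Lemma semialgebraic_formula (m k : nat) (S : ('I_m -> R) -> Prop) :
  semialgebraic S -> exists f : ord.formula R,
    forall e, S (fun i => nth 0 e (k + i)) <-> ord.holds e f.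
Proof.
elim => {S}.
- move=> p; exists (ord.Lt (GRing.Const 0) (term_of_mpoly (fun i : 'I_m => k + i) p)).
  by move=> e /=; rewrite term_of_mpolyE.
- by move=> S T _ [fS hS] _ [fT hT]; exists (ord.Or fS fT) => e /=; rewrite hS hT.
- by move=> S _ [fS hS]; exists (ord.Not fS) => e /=; rewrite hS.
- by move=> S T ST _ [fS hS]; exists fS => e; rewrite -hS ST.
Qed.

Section RealImaginaryParts.
Variable m : nat.

Definition re_mpoly (P : {mpoly C[m]}) : {mpoly R[m]} :=
  \sum_(k <- msupp P) (complex.Re P@_k) *: 'X_[k].
Definition im_mpoly (P : {mpoly C[m]}) : {mpoly R[m]} :=
  \sum_(k <- msupp P) (complex.Im P@_k) *: 'X_[k].

Lemma Re_is_additive : {morph (@complex.Re R) : x y / x + y}.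
Proof. by move=> [a b] [c d]. Qed.
Lemma Im_is_additive : {morph (@complex.Im R) : x y / x + y}.
Proof. by move=> [a b] [c d]. Qed.

Lemma meval_realpt (P : {mpoly C[m]}) (v : 'I_m -> R) :
  P.@[realpt v] = \sum_(k <- msupp P) P@_k * iR (\prod_i v i ^+ k i).
Proof.
rewrite mevalE; apply: eq_bigr => k _; congr (_ * _).
by rewrite rmorph_prod; apply: eq_bigr => i _; rewrite rmorphXn.
Qed.

Lemma re_mpolyE P v : (re_mpoly P).@[v] = complex.Re (P.@[realpt v]).
Proof.
rewrite meval_realpt (big_morph _ Re_is_additive (erefl : complex.Re (0 : C) = 0)).
rewrite /re_mpoly raddf_sum; apply: eq_bigr => k _ /=.
by rewrite mevalZ mevalX; case: (P@_k) => a b /=; rewrite mulr0 subr0.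
Qed.

Lemma im_mpolyE P v : (im_mpoly P).@[v] = complex.Im (P.@[realpt v]).
Proof.
rewrite meval_realpt (big_morph _ Im_is_additive (erefl : complex.Im (0 : C) = 0)).
rewrite /im_mpoly raddf_sum; apply: eq_bigr => k _ /=.
by rewrite mevalZ mevalX; case: (P@_k) => a b /=; rewrite mulr0 add0r.
Qed.
End RealImaginaryParts.

Lemma complex_eq0 (c : C) : c = 0 <-> complex.Re c = 0 /\ complex.Im c = 0.
Proof. by case: c => a b /=; split => [[-> ->]|[-> ->]]. Qed.

Variables (l n s : nat) (g : 'I_s -> laurent R l n).

Lemma joinpt_real_seq (y : 'I_l -> R) (w : seq R) :
  joinpt (realpt y) (realpt (pt_of_seq 0 n w)) =
  realpt (pt_of_seq 0 (l + n) (seq_of_pt y ++ w)).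
Proof.
apply: functional_extensionality_dep => i; rewrite /joinpt /realpt /pt_of_seq.
case: splitP => j ->; last by rewrite nth_cat_shift ?size_seq_of_pt.
by rewrite nth_cat size_seq_of_pt ltn_ord nth_seq_of_pt.
Qed.

Definition real_zeros_formula (P : {mpoly C[l + n]}) : ord.formula R :=
  ord.And (ord.Equal (term_of_mpoly (@nat_of_ord _) (re_mpoly P)) (GRing.Const 0))
          (ord.Equal (term_of_mpoly (@nat_of_ord _) (im_mpoly P)) (GRing.Const 0)).

Lemma holds_real_zeros_formula P y w :
  ord.holds (seq_of_pt y ++ w) (real_zeros_formula P) <->
  P.@[joinpt (realpt y) (realpt (pt_of_seq 0 n w))] = 0.
Proof.
by rewrite /= !term_of_mpolyE joinpt_real_seq complex_eq0 -re_mpolyE -im_mpolyE.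
Qed.

Definition real_torus_zeros_formula : ord.formula R :=
  ord.And
    (oall_block (enum 'I_n)
       (fun i => ord.Not (ord.Equal (GRing.Var _ (l + i)) (GRing.Const 0))))
    (oall_block (enum 'I_s) (fun j => real_zeros_formula (lnum (g j)))).

Lemma holds_real_torus_zeros_formula y w :
  ord.holds (seq_of_pt y ++ w) real_torus_zeros_formula <->
  torus_zeros g (realpt y) (realpt (pt_of_seq 0 n w)).
Proof.
rewrite /= !holds_oall_block /torus_zeros /in_torus.
have torusE : (forall i, i \in enum 'I_n -> ord.holds (seq_of_pt y ++ w)
      (ord.Not (ord.Equal (GRing.Var _ (l + i)) (GRing.Const 0)))) <->
    (forall i : 'I_n, realpt (pt_of_seq 0 n w) i != 0).
  split=> [w_neq0 i|w_neq0 i _ /=].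
    rewrite /realpt fmorph_eq0; have /= := w_neq0 i (mem_enum _ i).
    by rewrite nth_cat_shift ?size_seq_of_pt // => /eqP.
  rewrite nth_cat_shift ?size_seq_of_pt //; apply/eqP.
  by have := w_neq0 i; rewrite /realpt fmorph_eq0.
rewrite torusE; split=> [[w_neq0 g0]|[w_neq0 g0]]; split=> // j.
  by rewrite leval_eq0 // -holds_real_zeros_formula; apply: g0; rewrite mem_enum.
by move=> _; rewrite holds_real_zeros_formula -leval_eq0.
Qed.

Lemma real_projection_formula (X : ('I_n -> C) -> Prop) : real_semialgebraic X ->
  exists f : ord.formula R, forall y : 'I_l -> R,
    (exists x, torus_zeros g (realpt y) x /\ X x) <-> ord.holds (seq_of_pt y) f.
Proof.
move=> [S [S_sa XS]]; have [fS hS] := semialgebraic_formula l S_sa.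
exists (oexists_block l n (ord.And fS real_torus_zeros_formula)) => y.
rewrite holds_oexists_block ?size_seq_of_pt //.
have shiftE w : (fun i : 'I_n => nth 0 (seq_of_pt y ++ w) (l + i)) = pt_of_seq 0 n w.
  by apply: functional_extensionality_dep => i; rewrite nth_cat_shift ?size_seq_of_pt.
split=> [[x [zx /XS [v [Sv x_eq]]]]|[w [w_size [Sw /holds_real_torus_zeros_formula zw]]]].
  subst x; exists (seq_of_pt v); split; first exact: size_seq_of_pt.
  split; first by rewrite -hS shiftE seq_of_ptK.
  by apply/holds_real_torus_zeros_formula; rewrite seq_of_ptK.
exists (realpt (pt_of_seq 0 n w)); split => //.
by apply/XS; exists (pt_of_seq 0 n w); rewrite -shiftE hS.
Qed.
End RealDefinability.

(* The parameter sets of the theorem are generically locally constant: by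
   quantifier elimination, "g_a has a zero in X on the torus" is a
   quantifier-free condition on a. *)
Section DiscriminantSets.
Variables (R : realType) (l n s : nat) (g : 'I_s -> laurent R l n).
Local Notation iR := (real_complex R).

Lemma glc_projection (K : numFieldType) (iota : {rmorphism K -> R[i]})
    (iota_cont : forall d : R[i], 0 < d ->
       exists2 d' : K, 0 < d' & forall a : K, `|a| < d' -> `|iota a| < d)
    (X : ('I_n -> R[i]) -> Prop) :
  constructible X -> generically_locally_constant iota
    (fun z : 'I_l -> K => exists x, torus_zeros g (embed iota z) x /\ X x).
Proof.
move=> /(projection_formula g) [f hf]; have [f' [/andP[qf rf] hf']] := complex_qe f.
apply: (glc_ext (Y := fun z => GRing.qf_eval (seq_of_pt (embed iota z)) f')).
  by move=> z; rewrite hf hf'.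
exact: glc_qf.
Qed.

Lemma glc_real_projection (X : ('I_n -> R[i]) -> Prop) : real_semialgebraic X ->
  generically_locally_constant iR
    (fun y : 'I_l -> R => exists x, torus_zeros g (realpt y) x /\ X x).
Proof.
move=> /(real_projection_formula g) [f hf]; have [f' [/andP[qf rf] hf']] := real_qe f.
apply: (glc_ext (Y := fun y => ord.qf_eval (seq_of_pt y) f')).
  by move=> y; rewrite hf hf'.
exact: glc_oqf.
Qed.

Lemma realpt_inj : injective (@realpt R l).
Proof.
move=> y y' /(congr1 (fun v i => complex.Re (v i))) /= yy'.
exact: functional_extensionality_dep (fun i => congr1 (fun v => v i) yy').
Qed.

Lemma discr_set_realpt (A : ('I_l -> R[i]) -> Prop) (S : ('I_l -> R) -> Prop) X :
  (forall x, A x <-> exists y, S y /\ x = realpt y) -> forall y,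
  (S y /\ exists x, torus_zeros g (realpt y) x /\ X x) <->
  discr_set g A X (realpt y).
Proof.
move=> AS y; rewrite /discr_set AS.
split=> [[Sy zX]|[[y' [Sy' /realpt_inj y_eq]] zX]]; last by subst y'.
by split => //; exists y.
Qed.
End DiscriminantSets.

Theorem mainTheorem5 (R : realType) (l n s : nat)
  (g : 'I_s -> laurent R l n)
  (A : ('I_l -> R[i]) -> Prop) (X : ('I_n -> R[i]) -> Prop) :
  (   (real_semialgebraic A /\ real_torus_semialgebraic X)
   \/ (constructible A /\ torus_constructible X)
   \/ (real_semialgebraic A /\ torus_constructible X)) ->
  locally_zariski_dense A ->
  (zariski_dense (discr_set g A X) <->
   nonempty_interior_in A (discr_set g A X)).
Proof.
move=> hyp A_ldense; split; last exact: interior_zariski_dense.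
have DA x : discr_set g A X x -> A x by case.
have A_real (S : ('I_l -> R) -> Prop) :
    (forall x, A x <-> exists y, S y /\ x = realpt y) ->
    forall x, A x -> exists y, x = realpt y.
  by move=> AS x /AS [y [_ ->]]; exists y.
case: hyp => [[[S [S_sa AS]] [X_sa _]]|[[A_c [X_c _]]|[[S [S_sa AS]] [X_c _]]]].
-
  apply: dense_interior_real => //; first exact: A_real AS.
  apply: glc_ext (discr_set_realpt g X AS) _.
  exact: glc_and (glc_semialgebraic S_sa) (glc_real_projection g X_sa).
-
  apply: dense_interior_complex => //.
  exact: glc_and (glc_constructible A_c) (glc_projection g (@id_cont R) X_c).
- (* A semialgebraic, X constructible: complex quantifier elimination,
     evaluated at real parameters. *)
  apply: dense_interior_real => //; first exact: A_real AS.
  apply: glc_ext (discr_set_realpt g X AS) _.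
  exact: glc_and (glc_semialgebraic S_sa) (glc_projection g (@real_complex_cont R) X_c).
Qed.
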